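(* Let $\mathbb{K}$ be a field and let $L_1,\ldots,L_k$ be nonzero elements of $\mathbb{K}[x]\langle\partial\rangle$ of orders at most $r$ and with coefficients of degrees at most $d$. Then there exist nonzero common left multiples of $L_1,\ldots,L_k$ in $\mathbb{K}[x]\langle\partial\rangle$ of total degree at most $2k(d+r)$ in $(x,\partial)$, and of total arithmetic size $O(k^2(d+r)^2)$.
   Context: $\mathbb{K}[x]\langle\partial\rangle$ is the ring of differential operators $\sum a_{ij}x^i\partial^j$ ($a_{ij}\in\mathbb{K}$) with $\partial x=x\partial+1$. A common left multiple of $L_1,\ldots,L_k$ is an operator $L$ with $L=Q_1L_1=\cdots=Q_kL_k$ for some operators $Q_i$ (here all in $\mathbb{K}[x]\langle\partial\rangle$). The total degree of a nonzero operator $\sum a_{ij}x^i\partial^j$ is $\max\{i+j: a_{ij}\neq0\}$. The total arithmetic size of an operator is the number of coefficients in $\mathbb{K}$ needed to represent it in the monomial basis $x^i\partial^j$ up to its total degree; the $O(\cdot)$ constant is absolute. *)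

From HB Require Import structures.
From mathcomp Require Import all_boot all_order all_algebra.
Set Implicit Arguments. Unset Strict Implicit. Unset Printing Implicit Defensive.
Import GRing.Theory.
Local Open Scope ring_scope.

(* Differential operators K[x]<d> with  d x = x d + 1, represented as
   polynomials in d with coefficients in K[x]:
   L = \sum_j L`_j * d^j  is an element of {poly {poly K}},
   the inner polynomial variable being x, the outer one being d.
   The ring structure of {poly {poly K}} is the commutative one; the
   (non-commutative) Weyl product is weyl_mul below, defined by the
   Leibniz rule  (a d^i)(b d^j) = \sum_k C(i,k) a b^(k) d^(i+j-k). *)
Notation diffop K := {poly {poly K}}.
Section Weyl.
Variable K : fieldType.
Local Notation diffop := (diffop K).

Definition weyl_mul (L M : diffop) : diffop :=
  \sum_(i < size L) \sum_(j < size M) \sum_(k < i.+1)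
     (((L`_i * (M`_j)^`(k)) *+ 'C(i, k)) *: 'X^(i + j - k)).

(* order in d (meaningful for nonzero L) *)
Definition op_order (L : diffop) : nat := (size L).-1.

Definition coef_deg_le (L : diffop) (d : nat) : Prop :=
  forall j, (size (L`_j)%R <= d.+1)%N.

Definition total_degree (L : diffop) : nat :=
  \max_(j < size L) (if (L`_j != 0)%R then ((size (L`_j)%R).-1 + j)%N else 0%N).

(* number of monomials x^i d^j with i + j <= total degree *)
Definition arith_size (L : diffop) : nat := 'C(total_degree L + 2, 2).

Definition common_left_multiple (k : nat) (Ls : 'I_k -> diffop) (L : diffop) :=
  forall m : 'I_k, exists Q : diffop, L = weyl_mul Q (Ls m).
End Weyl.

From mathcomp Require Import all_boot all_order all_algebra.
From mathcomp Require Import zify.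
Set Implicit Arguments.
Unset Strict Implicit.
Unset Printing Implicit Defensive.
Import GRing.Theory.
Local Open Scope ring_scope.

(* Put s := d + r and look for multipliers Q_1, ..., Q_k of total degree at
   most M := (2k - 1)s with Q_1 L_1 = ... = Q_k L_k.  Total degree is
   subadditive for the Weyl product, so this is a homogeneous linear system in
   the k C(M + 2, 2) coefficients of the Q_i, with one equation per monomial of
   total degree at most M + s = 2ks in each difference Q_j L_j - Q_1 L_1, i.e.
   (k - 1) C(2ks + 2, 2) equations, which is fewer.  In a nonzero solution some
   Q_i is nonzero, and then so is Q_i L_i, because the leading coefficients
   in ∂ multiply.  A common multiple of total degree at most 2ks has at
   most C(2ks + 2, 2) <= 2 (ks + 1)^2 coefficients. *)

Lemma exists_rV_mulmx_eq0 (K : fieldType) m n (A : 'M[K]_(m, n)) :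
  (n < m)%N -> exists2 v : 'rV_m, v != 0 & v *m A = 0.
Proof.
move=> ltnm; have : kermx A != 0.
  by rewrite kermx_eq0 /row_free; have := rank_leq_col A; lia.
by case/rowV0Pn => v /sub_kermxP vA0 nz_v; exists v.
Qed.

Lemma exists_nontrivial_solution (K : fieldType) (I J : finType) (F : I -> J -> K) :
  (#|J| < #|I|)%N ->
  exists2 c : I -> K, (exists u, c u != 0) & forall w, \sum_u c u * F u w = 0.
Proof.
move=> ltJI.
pose A : 'M[K]_(#|I|, #|J|) := \matrix_(a, b) F (enum_val a) (enum_val b).
have [v /rV0Pn[a nz_va] vA0] := exists_rV_mulmx_eq0 A ltJI.
exists (fun u => v 0 (enum_rank u)); first by exists (enum_val a); rewrite enum_valK.
move=> w; have /matrixP/(_ 0 (enum_rank w)) := vA0; rewrite !mxE; apply: etrans.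
rewrite (reindex (fun a : 'I_#|I| => enum_val a)) /=; last first.
  by exists enum_rank => x _; rewrite ?enum_valK ?enum_rankK.
by apply: eq_bigr => a' _; rewrite enum_valK mxE enum_rankK.
Qed.

Definition exponents (N : nat) := {p : 'I_N.+1 * 'I_N.+1 | (p.1 + p.2 <= N)%N}.

Lemma sum_ltn_ord n c : (\sum_(b < n) (b < c))%N = minn c n.
Proof.
elim: n => [|n IHn]; first by rewrite big_ord0 minn0.
by rewrite big_ord_recr /= IHn; case: ltnP; lia.
Qed.

Lemma card_exponents N : #|{: exponents N}| = 'C(N.+2, 2).
Proof.
rewrite card_sig -sum1_card big_mkcond /=.
rewrite -(pair_bigA _ (fun a b : 'I_N.+1 => nat_of_bool (a + b <= N)%N)) /=.
rewrite (eq_bigr (fun a : 'I_N.+1 => (N - a).+1)); last first.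
  move=> a _; rewrite (eq_bigr (fun b : 'I_N.+1 => nat_of_bool (b < (N - a).+1)%N)).
    by rewrite sum_ltn_ord; have := ltn_ord a; lia.
  by move=> b _; rewrite ltnS leq_subRL // -ltnS.
rewrite (reindex_inj rev_ord_inj) /= -bin2_sum big_nat_recl // big_mkord add0n.
by apply: eq_bigr => a _; rewrite subSS subKn // -ltnS.
Qed.

Section WeylAlgebra.
Variable K : fieldType.
Local Notation dop := (diffop K).

Definition weyl_term (L M : dop) (i j k : nat) : dop :=
  (L`_i * (M`_j)^`(k)) *+ 'C(i, k) *: 'X^(i + j - k).

Lemma weyl_mul_widen (L M : dop) n : (size L <= n)%N ->
  weyl_mul L M = \sum_(i < n) \sum_(j < size M) \sum_(k < i.+1) weyl_term L M i j k.
Proof.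
move=> le_Ln; rewrite /weyl_mul (big_ord_widen n (fun i =>
  \sum_(j < size M) \sum_(k < i.+1) weyl_term L M i j k)) // big_mkcond.
apply: eq_bigr => i _; case: ltnP => // le_Li.
rewrite big1 // => j _; rewrite big1 // => k _.
by rewrite /weyl_term nth_default // mul0r mul0rn scale0r.
Qed.

Lemma weyl_mulDl (L1 L2 M : dop) :
  weyl_mul (L1 + L2) M = weyl_mul L1 M + weyl_mul L2 M.
Proof.
pose n := maxn (size L1) (size L2).
rewrite (@weyl_mul_widen _ _ n) ?(leq_trans (size_polyD _ _)) //.
rewrite (@weyl_mul_widen L1 _ n) ?leq_maxl // (@weyl_mul_widen L2 _ n) ?leq_maxr //.
rewrite -big_split; apply: eq_bigr => i _; rewrite -big_split; apply: eq_bigr => j _.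
rewrite -big_split; apply: eq_bigr => k _.
by rewrite /weyl_term coefD mulrDl mulrnDl scalerDl.
Qed.

Lemma weyl_mul0l (M : dop) : weyl_mul 0 M = 0.
Proof. by rewrite /weyl_mul size_poly0 big_ord0. Qed.

Lemma weyl_mulZl (a : {poly K}) (L M : dop) :
  weyl_mul (a *: L) M = a *: weyl_mul L M.
Proof.
rewrite (@weyl_mul_widen _ _ (size L)) ?size_scale_leq // /weyl_mul !scaler_sumr.
apply: eq_bigr => i _; rewrite scaler_sumr; apply: eq_bigr => j _.
rewrite scaler_sumr; apply: eq_bigr => k _.
by rewrite /weyl_term coefZ scalerA mulrnAr mulrA.
Qed.

Lemma weyl_mul_suml (I : finType) (P : pred I) (F : I -> dop) (M : dop) :
  weyl_mul (\sum_(i | P i) F i) M = \sum_(i | P i) weyl_mul (F i) M.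
Proof.
apply: (big_morph (fun Q : dop => weyl_mul Q M)) => [L1 L2|]; first exact: weyl_mulDl.
exact: weyl_mul0l.
Qed.

Lemma coef_weyl_term (L M : dop) i j k t :
  (weyl_term L M i j k)`_t = (L`_i * (M`_j)^`(k)) *+ 'C(i, k) *+ (t == i + j - k)%N.
Proof. by rewrite /weyl_term coefZ coefXn mulr_natr. Qed.

Lemma coef_weyl_mul_top (L M : dop) : L != 0 -> M != 0 ->
  (weyl_mul L M)`_((size L).-1 + (size M).-1) = lead_coef L * lead_coef M.
Proof.
move=> nz_L nz_M; set a := (size L).-1; set b := (size M).-1.
have sL : size L = a.+1 by rewrite prednK // size_poly_gt0.
have sM : size M = b.+1 by rewrite prednK // size_poly_gt0.
have off_top i j k : (i <= a)%N -> (j <= b)%N -> (k <= i)%N ->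
    (a + b == i + j - k)%N = [&& i == a, j == b & k == 0%N].
  move=> le_ia le_jb le_ki; apply/eqP/and3P => [e|[/eqP ei /eqP ej /eqP ek]]; last lia.
  by split; apply/eqP; lia.
rewrite (@weyl_mul_widen L M a.+1) ?sL // sM coef_sum (bigD1 ord_max) //=.
rewrite [X in _ + X]big1 ?addr0 => [|i ne_ia]; last first.
  rewrite coef_sum big1 // => j _; rewrite coef_sum big1 // => k _.
  have /negPf ne_ia' : (i : nat) != a := ne_ia.
  by rewrite coef_weyl_term (off_top i j k (ltn_ord i) (ltn_ord j) (ltn_ord k)) ne_ia'.
rewrite coef_sum (bigD1 ord_max) //= [X in _ + X]big1 ?addr0 => [|j ne_jb]; last first.
  have /negPf ne_jb' : (j : nat) != b := ne_jb.
  rewrite coef_sum big1 // => k _.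
  rewrite coef_weyl_term (off_top a j k (leqnn a) (ltn_ord j) (ltn_ord k)).
  by rewrite ne_jb' andbF.
rewrite coef_sum (bigD1 ord0) //= [X in _ + X]big1 ?addr0 => [|k ne_k0]; last first.
  have /negPf ne_k0' : (k : nat) != 0%N := ne_k0.
  by rewrite coef_weyl_term (off_top a b k (leqnn a) (leqnn b) (ltn_ord k)) ne_k0' !andbF.
by rewrite coef_weyl_term subn0 eqxx derivn0 bin0 !mulr1n /lead_coef sL sM.
Qed.

Lemma weyl_mul_neq0 (L M : dop) : L != 0 -> M != 0 -> weyl_mul L M != 0.
Proof.
move=> nz_L nz_M; apply: contraNneq (_ : lead_coef L * lead_coef M != 0) => [LM0|].
  by rewrite -coef_weyl_mul_top // LM0 coef0 eqxx.
by rewrite mulf_neq0 ?lead_coef_eq0.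
Qed.

(* [tdeg_le P N]: total degree at most N; the truncated subtraction forces the
   coefficients of ∂^j, j > N, to vanish. *)
Definition tdeg_le (P : dop) (N : nat) := forall j, (size (P`_j)%R <= N.+1 - j)%N.

Lemma tdeg_le0 N : tdeg_le 0 N.
Proof. by move=> j; rewrite coef0 size_poly0. Qed.

Lemma tdeg_leD P Q N : tdeg_le P N -> tdeg_le Q N -> tdeg_le (P + Q) N.
Proof.
by move=> leP leQ j; rewrite coefD (leq_trans (size_polyD _ _)) // geq_max leP leQ.
Qed.

Lemma tdeg_leN P N : tdeg_le P N -> tdeg_le (- P) N.
Proof. by move=> leP j; rewrite coefN size_polyN. Qed.

Lemma tdeg_le_sum (I : finType) (A : pred I) (F : I -> dop) N :
  (forall i, A i -> tdeg_le (F i) N) -> tdeg_le (\sum_(i | A i) F i) N.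
Proof.
move=> leF; apply: (big_ind (tdeg_le^~ N)) => // [|P Q]; first exact: tdeg_le0.
exact: tdeg_leD.
Qed.

Lemma tdeg_leZC (c : K) P N : tdeg_le P N -> tdeg_le (c%:P *: P) N.
Proof. by move=> leP j; rewrite coefZ mul_polyC (leq_trans (size_scale_leq _ _)). Qed.

Lemma tdeg_le_scaleXn (c : {poly K}) e N :
  (size c <= N.+1 - e)%N -> tdeg_le (c *: 'X^e) N.
Proof.
move=> le_c j; rewrite coefZ coefXn; case: eqP => [-> | _]; first by rewrite mulr1.
by rewrite mulr0 size_poly0.
Qed.

Lemma size_weyl_coef_le (p q : {poly K}) a b i j k : (k <= i)%N ->
  (size p <= a.+1 - i)%N -> (size q <= b.+1 - j)%N ->
  (size (p * q^`(k) *+ 'C(i, k)) <= (a + b).+1 - (i + j - k))%N.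
Proof.
move=> le_ki le_p le_q; rewrite -scaler_nat (leq_trans (size_scale_leq _ _)) //.
have le_der : (size q^`(k) <= size q - k)%N.
  by apply/leq_sizeP => t le_t; rewrite coef_derivn nth_default ?mul0rn // -leq_subLR.
have [-> | nz_p] := eqVneq p 0; first by rewrite mul0r size_poly0.
have [-> | nz_der] := eqVneq q^`(k) 0; first by rewrite mulr0 size_poly0.
rewrite (leq_trans (size_polyMleq _ _)) //; rewrite -!size_poly_gt0 in nz_p nz_der; lia.
Qed.

Lemma tdeg_le_weyl_mul (L M : dop) a b :
  tdeg_le L a -> tdeg_le M b -> tdeg_le (weyl_mul L M) (a + b).
Proof.
move=> leL leM; apply: tdeg_le_sum => i _; apply: tdeg_le_sum => j _.
apply: tdeg_le_sum => k _; apply: tdeg_le_scaleXn.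
exact: size_weyl_coef_le (ltn_ord k : (k <= i)%N) (leL i) (leM j).
Qed.

Lemma total_degree_le P N : tdeg_le P N -> (total_degree P <= N)%N.
Proof.
move=> leP; apply/bigmax_leqP => j _; case: ifP => // nz_Pj.
have := leP j; rewrite -size_poly_gt0 in nz_Pj; lia.
Qed.

Lemma tdeg_le_order_coef_deg L r d :
  (op_order L <= r)%N -> coef_deg_le L d -> tdeg_le L (d + r).
Proof.
rewrite /op_order => le_Lr leL j; case: (leqP j r) => [le_jr | lt_rj].
  by rewrite (leq_trans (leL j)) //; lia.
rewrite nth_default ?size_poly0 // (leq_trans (leqSpred _)) //.
exact: leq_ltn_trans le_Lr lt_rj.
Qed.

Definition monomial (a b : nat) : dop := 'X^a *: 'X^b.

Lemma tdeg_le_monomial a b N : (a + b <= N)%N -> tdeg_le (monomial a b) N.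
Proof. by move=> le_abN; apply: tdeg_le_scaleXn; rewrite size_polyXn; lia. Qed.

Definition coef2 (P : dop) (a b : nat) : K := P`_b`_a.

Lemma coef2_sum (I : finType) (A : pred I) (c : I -> K) (F : I -> dop) a b :
  coef2 (\sum_(i | A i) (c i)%:P *: F i) a b = \sum_(i | A i) c i * coef2 (F i) a b.
Proof.
by rewrite /coef2 !coef_sum; apply: eq_bigr => i _; rewrite coefZ coefCM.
Qed.

Lemma coef2_monomial a b a' b' :
  coef2 (monomial a b) a' b' = ((a == a') && (b == b'))%:R.
Proof.
rewrite /coef2 coefZ coefXn [b' == b]eq_sym.
by case: (b == b'); rewrite ?mulr0 ?coef0 ?andbF // mulr1 andbT coefXn eq_sym.
Qed.

Lemma tdeg_le_eq0 (P : dop) N : tdeg_le P N ->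
  (forall a b, (a + b <= N)%N -> coef2 P a b = 0) -> P = 0.
Proof.
move=> leP P0; apply/polyP => b; apply/polyP => a; rewrite !coef0.
case: (leqP (a + b) N) => [|lt_N]; first exact: P0.
by rewrite nth_default // (leq_trans (leP b)) //; lia.
Qed.

End WeylAlgebra.

Lemma mul2n_bin2 n : (2 * 'C(n, 2) = n * n.-1)%N.
Proof. by rewrite -mul_bin_diag bin1. Qed.

Section CommonLeftMultiple.
Variables (K : fieldType) (k s : nat) (Ls : 'I_k.+1 -> diffop K).
Hypothesis Ls_neq0 : forall i, Ls i != 0.
Hypothesis tdeg_Ls : forall i, tdeg_le (Ls i) s.

Local Notation M := ((2 * k + 1) * s)%N.
Local Notation N := (M + s)%N.

Definition monomial_of n (p : exponents n) : diffop K := monomial K (val p).1 (val p).2.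

Lemma coef2_monomial_of n (p q : exponents n) :
  coef2 (monomial_of p) (val q).1 (val q).2 = (val p == val q)%:R.
Proof.
by case: p q => [[a b] ?] [[a' b'] ?]; rewrite coef2_monomial /= xpair_eqE.
Qed.

Definition multiplier (c : 'I_k.+1 * exponents M -> K) i : diffop K :=
  \sum_(u | u.1 == i) (c u)%:P *: monomial_of u.2.

Definition product c i := weyl_mul (multiplier c i) (Ls i).

Lemma tdeg_le_product c i : tdeg_le (product c i) N.
Proof.
apply: tdeg_le_weyl_mul (tdeg_Ls i); apply: tdeg_le_sum => u _.
by apply/tdeg_leZC/tdeg_le_monomial; case: u.2.
Qed.

Lemma coef2_multiplier c i (p : exponents M) :
  coef2 (multiplier c i) (val p).1 (val p).2 = c (i, p).
Proof.
rewrite coef2_sum (bigD1 (i, p)) //= coef2_monomial_of eqxx mulr1 big1 ?addr0 //.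
move=> u /andP[/eqP eq_i ne_u]; rewrite coef2_monomial_of.
have [/val_inj eq_p | _] := eqVneq (val u.2) (val p); last by rewrite mulr0.
by case: u eq_i eq_p ne_u => i' p' /= -> ->; rewrite eqxx.
Qed.

(* Unknown u = (i, p) is the coefficient of x^p.1 ∂^p.2 in the multiplier of
   L_i; equation (j, q) says that the coefficient of x^q.1 ∂^q.2 in
   Q_(j+1) L_(j+1) - Q_0 L_0 vanishes. *)
Definition equation (u : 'I_k.+1 * exponents M) (w : 'I_k * exponents N) : K :=
  let: (j, q) := w in
  let e := coef2 (weyl_mul (monomial_of u.2) (Ls u.1)) (val q).1 (val q).2 in
  e *+ (u.1 == lift ord0 j) - e *+ (u.1 == ord0).

Lemma coef2_product c i a b :
  coef2 (product c i) a b =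
  \sum_u c u * coef2 (weyl_mul (monomial_of u.2) (Ls u.1)) a b *+ (u.1 == i).
Proof.
rewrite /product weyl_mul_suml (eq_bigr (fun u => (c u)%:P *:
  weyl_mul (monomial_of u.2) (Ls u.1))) => [|u /eqP->]; last by rewrite weyl_mulZl.
by rewrite coef2_sum big_mkcond; apply: eq_bigr => u _; rewrite mulrb.
Qed.

Lemma sum_equation c j q : \sum_u c u * equation u (j, q) =
  coef2 (product c (lift ord0 j) - product c ord0) (val q).1 (val q).2.
Proof.
rewrite /coef2 !coefB -/(coef2 _ _ _) -/(coef2 _ _ _) !coef2_product -sumrB.
by apply: eq_bigr => u _; rewrite mulrBr !mulrnAr.
Qed.

Lemma card_equations_lt :
  (#|{: 'I_k * exponents N}| < #|{: 'I_k.+1 * exponents M}|)%N.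
Proof.
rewrite !card_prod !card_ord !card_exponents -(ltn_pmul2l (isT : (0 < 2)%N)).
rewrite mulnCA [X in (_ < X)%N]mulnCA !mul2n_bin2 /=; nia.
Qed.

Lemma exists_common_left_multiple :
  exists L, [/\ L != 0, common_left_multiple Ls L & tdeg_le L (2 * k.+1 * s)].
Proof.
have [c [[i p] nz_c] c_sol] := exists_nontrivial_solution equation card_equations_lt.
have product_eq (j : 'I_k) : product c (lift ord0 j) = product c ord0.
  apply/eqP; rewrite -subr_eq0; apply/eqP/(tdeg_le_eq0 (N := N)).
    by apply/tdeg_leD/tdeg_leN; apply: tdeg_le_product.
  move=> a b le_abN; have le_ab : ((inord a : 'I_N.+1) + (inord b : 'I_N.+1) <= N)%N.
    by rewrite !inordK //; lia.
  have := c_sol (j, exist _ (inord a, inord b) le_ab).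
  by rewrite sum_equation /= !inordK //; lia.
have product_const i' : product c i' = product c ord0.
  by case: (unliftP ord0 i') => [j ->|->].
exists (product c ord0); split.
- rewrite -(product_const i) weyl_mul_neq0 //.
  by apply: contra_neq nz_c => c_i0; rewrite -coef2_multiplier c_i0 /coef2 !coef0.
- by move=> i'; exists (multiplier c i'); rewrite -(product_const i').
- by rewrite (_ : 2 * k.+1 * s = N)%N; [exact: tdeg_le_product | lia].
Qed.

End CommonLeftMultiple.

Lemma arith_size_le (K : fieldType) (L : diffop K) n :
  (total_degree L <= 2 * n)%N -> (arith_size L <= 2 * n.+1 ^ 2)%N.
Proof.
move=> le_L; rewrite /arith_size -(leq_pmul2l (isT : (0 < 2)%N)).
apply: (@leq_trans (2 * 'C(2 * n + 2, 2))).
  by rewrite leq_pmul2l // leq_bin2l // leq_add2r.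
by rewrite mul2n_bin2; nia.
Qed.

Theorem theorem8 :
  exists C : nat,
  forall (K : fieldType) (k r d : nat) (Ls : 'I_k -> diffop K),
    (forall m, Ls m != 0) ->
    (forall m, (op_order (Ls m) <= r)%N) ->
    (forall m, coef_deg_le (Ls m) d) ->
    exists L : diffop K,
      [/\ L != 0, common_left_multiple Ls L,
          (total_degree L <= 2 * k * (d + r))%N
        & (arith_size L <= C * (k * (d + r)).+1 ^ 2)%N].
Proof.
exists 2%N => K k r d Ls Ls_neq0 ord_Ls deg_Ls.
have [L [nz_L mult_L tdeg_L]] : exists L,
    [/\ L != 0, common_left_multiple Ls L & tdeg_le L (2 * k * (d + r))].
  case: k Ls Ls_neq0 ord_Ls deg_Ls => [|k] Ls Ls_neq0 ord_Ls deg_Ls.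
    exists (monomial K 0 0); split; last exact: tdeg_le_monomial.
      by rewrite /monomial !expr0 scale1r oner_neq0.
    by case.
  apply: exists_common_left_multiple => // i.
  exact: tdeg_le_order_coef_deg (ord_Ls i) (deg_Ls i).
have le_L := total_degree_le tdeg_L.
by exists L; split; rewrite // arith_size_le // mulnA.
Qed.
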